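(* Let $\vec e$ be a finite set of input-output examples and let $\mathcal{P}_i\subseteq\mathcal{U}$ be a set of predicates. Let $\Pi_i$ be a program returned by the ranking step in iteration $i$ of the synthesis loop, so $\Pi_i\in\mathcal{L}(\mathcal{A}_{\mathcal{P}_i})$, and suppose $\Pi_i$ does not satisfy some example $e=(e_{in},e_{out})\in\vec e$. Let $\mathcal{I}$ be a proof of incorrectness of $\Pi_i$ with respect to $e$, and let $\mathcal{P}_{i+1}=\mathcal{P}_i\cup\{\text{predicates occurring in } \mathcal{I}\}$. Then $\Pi_i\notin\mathcal{L}(\mathcal{A}_{\mathcal{P}_{i+1}})$ and $\mathcal{L}(\mathcal{A}_{\mathcal{P}_{i+1}})\subsetneq\mathcal{L}(\mathcal{A}_{\mathcal{P}_i})$.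
   Context: A DSL is given by a context-free grammar $G$ with start symbol $s_0$. Each production has the form $s\to t$ with $t$ a terminal, which is either the program input variable $x$ or a constant, or $s\to f(s_1,\dots,s_n)$ with $f$ a function symbol. Programs are finite ASTs derived from $s_0$, with leaves labelled by terminals and internal nodes labelled by function symbols. Concrete semantics: $[\![x]\!]c=c$; $[\![t]\!]$ is the fixed value of a constant $t$; $[\![f(\Pi_1,\dots,\Pi_n)]\!]c=[\![f]\!]([\![\Pi_1]\!]c,\dots,[\![\Pi_n]\!]c)$. An example is $e=(e_{in},e_{out})$, and $\Pi$ satisfies $e$ iff $[\![\Pi]\!]e_{in}=e_{out}$. A predicate over a grammar symbol $s$ is a formula with sole free variable $s$. An abstract value is a conjunction of predicates ($\mathit{true}$ is the empty conjunction). $\gamma(\varphi)$ is the set of values satisfying $\varphi$, and $\varphi\sqsubseteq\varphi'$ iff $\varphi\Rightarrow\varphi'$. For a set $\mathcal{P}$ of predicates, $\alpha^{\mathcal{P}}(\varphi)$ is the conjunction of all $p\in\mathcal{P}$ (over the relevant symbol) with $\varphi\Rightarrow p$. $\mathcal{U}$ is a fixed universe of predicates, and an abstract value over $\mathcal{U}$ is a conjunction of predicates from $\mathcal{U}$. For each production $s\to f(s_1,\dots,s_n)$, an abstract transformer gives an abstract value $[\![f(\varphi_1,\dots,\varphi_n)]\!]^\#$ over $s$. It is sound: $c_i\in\gamma(\varphi_i)$ implies $[\![f]\!](c_1,\dots,c_n)\in\gamma([\![f(\varphi_1,\dots,\varphi_n)]\!]^\#)$. It is monotone: $\varphi_i\sqsubseteq\varphi_i'$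 for all $i$ implies $[\![f(\vec\varphi)]\!]^\#\sqsubseteq[\![f(\vec\varphi')]\!]^\#$. Abstract evaluation $\mathrm{EvalAbstract}(\Pi,c,\mathcal{P})$ is defined recursively: for a leaf $x$ it is $\alpha^{\mathcal{P}}(x=c)$; for a leaf constant $t$ it is $\alpha^{\mathcal{P}}(t=[\![t]\!])$; for a node $f$ with subtrees $\Pi_1,\dots,\Pi_n$ it is $\alpha^{\mathcal{P}}([\![f(\mathrm{EvalAbstract}(\Pi_1,c,\mathcal{P}),\dots,\mathrm{EvalAbstract}(\Pi_n,c,\mathcal{P}))]\!]^\#)$. The abstract finite tree automaton (AFTA) $\mathcal{A}_{\mathcal{P}}$ built from $G$, $\vec e$ and $\mathcal{P}$ has states $q_s^{\vec\varphi}$, where $\vec\varphi$ holds one abstract value per example. Each program $\Pi$ reaches the state whose $j$-th component is $\mathrm{EvalAbstract}(\Pi,e_{j,in},\mathcal{P})$. A state $q_{s_0}^{\vec\varphi}$ is final iff $e_{j,out}\in\gamma(\varphi_j)$ for every example $e_j\in\vec e$. Hence its language is $\mathcal{L}(\mathcal{A}_{\mathcal{P}})=\{\Pi : e_{j,out}\in\gamma(\mathrm{EvalAbstract}(\Pi,e_{j,in},\mathcal{P}))\text{ for all } e_j\in\vec e\}$. A proof of incorrectness of $\Pi$ with respect to $e$ is a map $\mathcal{I}$ from nodes of $\Pi$ to abstract values over $\mathcal{U}$ satisfying three conditions: (1) for every leaf $v$ with terminal $t$, $(t=[\![t]\!]e_{in})\sqsubseteq\mathcal{I}(v)$, where $[\![x]\!]e_{in}=e_{in}$;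 (2) for every internal node $v$ labelled $f$ with children $v_1,\dots,v_n$, $[\![f(\mathcal{I}(v_1),\dots,\mathcal{I}(v_n))]\!]^\#\sqsubseteq\mathcal{I}(v)$; (3) $e_{out}\notin\gamma(\mathcal{I}(\mathrm{root}(\Pi)))$. *)

From Stdlib Require Import List.
Import ListNotations.
Set Implicit Arguments.

Record DSL := mkDSL {
  Sym : Type;
  Fn : Type;
  Const : Type;
  Val : Type;
  Pred : Type;
  s0 : Sym;
  leafprod : Sym -> option Const -> Prop;
      (* production s -> t; the terminal [None] is the input variable x,
         [Some k] is the constant k *)
  nodeprod : Sym -> Fn -> list Sym -> Prop;
  fsem : Fn -> list Val -> Val;
  csem : Const -> Val;
  psym : Pred -> Sym;
  psem : Pred -> Val -> Prop;
  U : Pred -> Prop;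
  absT : Sym -> Fn -> list Sym -> list (Pred -> Prop) -> (Pred -> Prop)
}.

Section Defs.
Variable D : DSL.

(** Abstract values: conjunctions of predicates, represented as the set of
    conjuncts. [true] is the empty set. *)
Definition absval := Pred D -> Prop.

Definition gamma (phi : absval) : Val D -> Prop :=
  fun v => forall p, phi p -> psem D p v.

Definition absle (phi phi' : absval) : Prop :=
  forall v, gamma phi v -> gamma phi' v.

Definition over_U (s : Sym D) (phi : absval) : Prop :=
  forall p, phi p -> U D p /\ psym D p = s.

(** alpha^P of a formula over s, given semantically by its set of models *)
Definition alpha (P : Pred D -> Prop) (s : Sym D) (phi : Val D -> Prop) : absval :=
  fun p => P p /\ psym D p = s /\ (forall v, phi v -> psem D p v).

(** Programs: ASTs whose nodes are annotated with the grammar symbol they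
    are derived from. *)
Inductive prog : Type :=
| Leaf : Sym D -> option (Const D) -> prog
| Node : Sym D -> Fn D -> list prog -> prog.

Definition rootsym (t : prog) : Sym D :=
  match t with Leaf s _ => s | Node s _ _ => s end.

Fixpoint wf (t : prog) : Prop :=
  match t with
  | Leaf s tm => leafprod D s tm
  | Node s f ch =>
      nodeprod D s f (map rootsym ch) /\
      (fix wfl (l : list prog) : Prop :=
         match l with nil => True | c :: l' => wf c /\ wfl l' end) ch
  end.

Definition program (t : prog) : Prop := rootsym t = s0 D /\ wf t.

Definition termval (tm : option (Const D)) (c : Val D) : Val D :=
  match tm with None => c | Some k => csem D k end.

Fixpoint eval (t : prog) (c : Val D) : Val D :=
  match t with
  | Leaf _ tm => termval tm c
  | Node _ f ch => fsem D f (map (fun u => eval u c) ch)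
  end.

Definition example := (Val D * Val D)%type.

Definition satisfies (t : prog) (e : example) : Prop := eval t (fst e) = snd e.

Fixpoint evalAbstract (t : prog) (c : Val D) (P : Pred D -> Prop) : absval :=
  match t with
  | Leaf s tm => alpha P s (fun v => v = termval tm c)
  | Node s f ch =>
      alpha P s (gamma (absT D s f (map rootsym ch)
                         (map (fun u => evalAbstract u c P) ch)))
  end.

Definition langAFTA (exs : list example) (P : Pred D -> Prop) (t : prog) : Prop :=
  program t /\ forall e, In e exs -> gamma (evalAbstract t (fst e) P) (snd e).

(** Nodes of a program, addressed by paths from the root. *)
Fixpoint subtree (t : prog) (v : list nat) : option prog :=
  match v with
  | nil => Some t
  | k :: v' =>
      match t with
      | Leaf _ _ => None
      | Node _ _ ch =>
          match nth_error ch k with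
          | Some u => subtree u v'
          | None => None
          end
      end
  end.

Definition is_node (t : prog) (v : list nat) : Prop := subtree t v <> None.

Definition proof_of_incorrectness (t : prog) (e : example)
  (I : list nat -> absval) : Prop :=
  (forall v u, subtree t v = Some u -> over_U (rootsym u) (I v)) /\
  (forall v s tm, subtree t v = Some (Leaf s tm) ->
     (* (t = [[t]] e_in) ⊑ I(v), i.e. [[t]] e_in ∈ γ(I(v)) *)
     gamma (I v) (termval tm (fst e))) /\
  (forall v s f ch, subtree t v = Some (Node s f ch) ->
     absle (absT D s f (map rootsym ch)
              (map (fun k => I (v ++ [k])) (seq 0 (length ch))))
           (I v)) /\
  ~ gamma (I nil) (snd e).

Definition transformers_ok : Prop :=
  (forall s f ss, nodeprod D s f ss ->
     forall phis, length phis = length ss ->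
     over_U s (absT D s f ss phis)) /\
  (forall s f ss, nodeprod D s f ss ->
     forall phis cs, length phis = length ss -> length cs = length ss ->
     (forall i phi c, nth_error phis i = Some phi -> nth_error cs i = Some c ->
        nth_error ss i <> None -> over_U (nth i ss (s0 D)) phi /\ gamma phi c) ->
     gamma (absT D s f ss phis) (fsem D f cs)) /\
  (forall s f ss, nodeprod D s f ss ->
     forall phis phis', length phis = length ss -> length phis' = length ss ->
     (forall i phi phi', nth_error phis i = Some phi ->
        nth_error phis' i = Some phi' ->
        over_U (nth i ss (s0 D)) phi /\ over_U (nth i ss (s0 D)) phi' /\
        absle phi phi') ->
     absle (absT D s f ss phis) (absT D s f ss phis')).

End Defs.

(* EvalAbstract over a predicate set P yields, at every node, the strongest
   sound annotation of the program built from predicates of P: any sound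
   annotation whose predicates lie in P is implied by it, by induction on the
   program and monotonicity of the abstract transformers.  Since EvalAbstract
   over P is itself such an annotation, adding predicates can only strengthen
   abstract values, so the refined automaton accepts fewer programs.  Once P
   contains the predicates of a proof of incorrectness I, the abstract value
   at the root implies I(root), which excludes e_out; hence Pi_i is rejected
   by the refined automaton although it was accepted before. *)
From Stdlib Require Import List.
Import ListNotations.
Set Implicit Arguments.

Lemma nth_error_map_Some {A B} (g : A -> B) l i y :
  nth_error (map g l) i = Some y -> exists x, nth_error l i = Some x /\ y = g x.
Proof.
  rewrite nth_error_map. destruct (nth_error l i); simpl; intro H; inversion H; eauto.
Qed.

Lemma nth_error_map_seq0 {B} (g : nat -> B) n i y :
  nth_error (map g (seq 0 n)) i = Some y -> y = g i.
Proof.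
  intros [k [Hk ->]]%nth_error_map_Some. rewrite nth_error_seq in Hk.
  destruct (PeanoNat.Nat.ltb i n); inversion Hk; reflexivity.
Qed.

Lemma map_seq_nth_error {A B} (g : option A -> B) (l : list A) :
  map (fun k => g (nth_error l k)) (seq 0 (length l)) = map (fun x => g (Some x)) l.
Proof.
  revert g; induction l as [|x l IH]; intros g; simpl; auto.
  rewrite <- seq_shift, map_map. simpl. f_equal. exact (IH g).
Qed.

Section AbstractEvaluation.
Variable D : DSL.

Definition absincl (phi psi : absval D) : Prop := forall p, phi p -> psi p.

Lemma absincl_absle {phi psi : absval D} : absincl phi psi -> absle psi phi.
Proof. unfold absincl, absle, gamma; eauto. Qed.

Lemma absle_alpha (P : Pred D -> Prop) (s : Sym D) (phi : absval D) :
  absle phi (alpha D P s (gamma phi)).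
Proof. intros w Hw p [_ [_ Hp]]; auto. Qed.

Lemma prog_ind_Forall (Q : prog D -> Prop)
  (HL : forall s tm, Q (Leaf D s tm))
  (HN : forall s f ch, Forall Q ch -> Q (Node s f ch)) : forall t, Q t.
Proof.
  fix IH 1. intros [s tm|s f ch]; [apply HL|apply HN].
  induction ch as [|c ch IHch]; constructor; auto.
Qed.

Lemma wf_Node s f ch :
  wf (Node s f ch) -> nodeprod D s f (map (@rootsym D) ch) /\ Forall (@wf D) ch.
Proof.
  simpl. intros [Hprod Hch]. split; [exact Hprod|]. clear Hprod.
  induction ch as [|c ch IHch]; constructor; destruct Hch; auto.
Qed.

Lemma subtree_app (t : prog D) v w :
  subtree t (v ++ w) = match subtree t v with Some u => subtree u w | None => None end.
Proof.
  revert t; induction v as [|k v IH]; intros t; simpl; auto.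
  destruct t as [|s f ch]; auto. destruct (nth_error ch k); auto.
Qed.

Lemma subtree_child (t : prog D) v s f ch i u :
  subtree t v = Some (Node s f ch) -> nth_error ch i = Some u ->
  subtree t (v ++ [i]) = Some u.
Proof. intros Hv Hi. rewrite subtree_app, Hv. simpl. rewrite Hi. reflexivity. Qed.

(** Conditions (1) and (2) of a proof of incorrectness, for an arbitrary input. *)
Definition sound_annotation (t : prog D) (c : Val D) (I : list nat -> absval D) : Prop :=
  (forall v u, subtree t v = Some u -> over_U (rootsym u) (I v)) /\
  (forall v s tm, subtree t v = Some (Leaf D s tm) -> gamma (I v) (termval D tm c)) /\
  (forall v s f ch, subtree t v = Some (Node s f ch) ->
     absle (absT D s f (map (@rootsym D) ch)
              (map (fun k => I (v ++ [k])) (seq 0 (length ch))))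
           (I v)).

Lemma proof_of_incorrectness_sound t e I :
  proof_of_incorrectness t e I -> sound_annotation t (fst e) I.
Proof. intros [Hover [Hleaf [Hnode _]]]. exact (conj Hover (conj Hleaf Hnode)). Qed.

Definition annotation_preds (t : prog D) (I : list nat -> absval D) (p : Pred D) : Prop :=
  exists v, is_node t v /\ I v p.

Lemma annotation_preds_U t c I :
  sound_annotation t c I -> forall p, annotation_preds t I p -> U D p.
Proof.
  intros [Hover _] p [v [Hv Hp]].
  destruct (subtree t v) as [u|] eqn:Hu; [|contradiction].
  exact (proj1 (Hover v u Hu p Hp)).
Qed.

Variable P : Pred D -> Prop.
Hypothesis P_U : forall p, P p -> U D p.

Lemma evalAbstract_over_U t c : over_U (rootsym t) (evalAbstract t c P).
Proof. destruct t; intros p [Hp [Hs _]]; auto. Qed.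

Definition evalAbstract_annotation (t : prog D) (c : Val D) (v : list nat) : absval D :=
  match subtree t v with Some u => evalAbstract u c P | None => fun _ => False end.

Lemma evalAbstract_annotation_sound t c :
  sound_annotation t c (evalAbstract_annotation t c).
Proof.
  unfold evalAbstract_annotation. split; [|split].
  - intros v u ->. apply evalAbstract_over_U.
  - intros v s tm -> p [_ [_ Hp]]. auto.
  - intros v s f ch Hv. rewrite Hv.
    replace (map _ (seq 0 (length ch))) with (map (fun u => evalAbstract u c P) ch).
    + apply absle_alpha.
    + rewrite <- (map_seq_nth_error (fun o => match o with
                                              | Some u => evalAbstract u c P
                                              | None => fun _ => False end)).
      apply map_ext. intro k. rewrite subtree_app, Hv. simpl.
      destruct (nth_error ch k); reflexivity.
Qed.

Lemma evalAbstract_annotation_preds t c p :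
  annotation_preds t (evalAbstract_annotation t c) p -> P p.
Proof.
  intros [v [_ Hp]]. unfold evalAbstract_annotation in Hp.
  destruct (subtree t v) as [[]|]; [apply Hp|apply Hp|contradiction].
Qed.

Hypothesis HT : transformers_ok D.

Theorem evalAbstract_strongest t c I u v :
  sound_annotation t c I -> (forall p, annotation_preds t I p -> P p) ->
  subtree t v = Some u -> wf u -> absincl (I v) (evalAbstract u c P).
Proof.
  intros [Hover [Hleaf Hnode]] HIP. revert v.
  assert (HIP_at : forall w node p, subtree t w = Some node -> I w p -> P p)
    by (intros w node p Hw Hp; apply HIP; exists w; split; [congruence|exact Hp]).
  destruct HT as [_ [_ Hmono]].
  induction u as [s tm|s f ch IH] using prog_ind_Forall;
    intros v Hv Hwf p Hp; (split; [exact (HIP_at _ _ _ Hv Hp)|]);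
    (split; [exact (proj2 (Hover _ _ Hv p Hp))|]).
  - intros w ->. exact (Hleaf _ _ _ Hv p Hp).
  - apply wf_Node in Hwf as [Hprod Hwfs].
    intros w Hw. apply (Hnode _ _ _ _ Hv w); [|exact Hp]. revert w Hw.
    apply (Hmono _ _ _ Hprod); try (rewrite ?length_map, ?length_seq; reflexivity).
    intros i phi phi' Hphi Hphi'.
    apply nth_error_map_Some in Hphi as [child [Hchild ->]].
    apply nth_error_map_seq0 in Hphi' as ->.
    erewrite nth_error_nth by (rewrite nth_error_map, Hchild; reflexivity).
    assert (Hsub := subtree_child _ _ _ Hv Hchild).
    assert (Hin := nth_error_In _ _ Hchild).
    rewrite Forall_forall in IH, Hwfs.
    split; [apply evalAbstract_over_U|split; [exact (Hover _ _ Hsub)|]].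
    apply absincl_absle, (IH child Hin _ Hsub), Hwfs, Hin.
Qed.

End AbstractEvaluation.

Section Refinement.
Variables (D : DSL) (HT : transformers_ok D) (exs : list (example D)).

Lemma evalAbstract_mono (P Q : Pred D -> Prop) t c :
  (forall p, P p -> Q p) -> (forall p, Q p -> U D p) -> wf t ->
  absincl (evalAbstract t c P) (evalAbstract t c Q).
Proof.
  intros HPQ HQ Hwf.
  assert (HPU : forall p, P p -> U D p) by auto.
  apply (evalAbstract_strongest Q HQ HT nil (evalAbstract_annotation_sound P HPU t c));
    [|reflexivity|exact Hwf].
  intros p Hp. apply HPQ. exact (evalAbstract_annotation_preds Hp).
Qed.

Lemma langAFTA_antimono (P Q : Pred D -> Prop) t :
  (forall p, P p -> Q p) -> (forall p, Q p -> U D p) ->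
  langAFTA exs Q t -> langAFTA exs P t.
Proof.
  intros HPQ HQ [Hprog Hacc]. split; [exact Hprog|].
  intros e' He'.
  assert (Hincl : absincl (evalAbstract t (fst e') P) (evalAbstract t (fst e') Q))
    by (apply evalAbstract_mono; [exact HPQ|exact HQ|apply Hprog]).
  exact (absincl_absle Hincl (Hacc e' He')).
Qed.

Lemma proof_of_incorrectness_rejects (P : Pred D -> Prop) t e I :
  (forall p, P p -> U D p) -> In e exs -> proof_of_incorrectness t e I ->
  (forall p, annotation_preds t I p -> P p) -> ~ langAFTA exs P t.
Proof.
  intros HPU He HI HIP [[_ Hwf] Hacc].
  assert (Hincl := evalAbstract_strongest P HPU HT nil
                     (proof_of_incorrectness_sound HI) HIP eq_refl Hwf).
  exact (proj2 (proj2 (proj2 HI)) (absincl_absle Hincl (Hacc e He))).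
Qed.

End Refinement.

Theorem mainTheorem2 (D : DSL) (HT : transformers_ok D)
  (exs : list (example D)) (Pi : Pred D -> Prop) (HPi : forall p, Pi p -> U D p)
  (t : prog D) (Ht : langAFTA exs Pi t)
  (e : example D) (He : In e exs) (Hne : ~ satisfies t e)
  (I : list nat -> absval D) (HI : proof_of_incorrectness t e I) :
  let Pi1 := fun p => Pi p \/ (exists v, is_node t v /\ I v p) in
  ~ langAFTA exs Pi1 t /\
  (forall t', langAFTA exs Pi1 t' -> langAFTA exs Pi t') /\
  (exists t', langAFTA exs Pi t' /\ ~ langAFTA exs Pi1 t').
Proof.
  intros Pi1.
  assert (HPi1 : forall p, Pi1 p -> U D p).
  { intros p [Hp|Hp]; [exact (HPi p Hp)|].
    exact (annotation_preds_U (proof_of_incorrectness_sound HI) Hp). }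
  assert (Hrej : ~ langAFTA exs Pi1 t)
    by (apply (proof_of_incorrectness_rejects HT HPi1 He HI); intros p Hp; right; exact Hp).
  split; [exact Hrej|split].
  - intros t'. apply (langAFTA_antimono HT); [intros p Hp; left; exact Hp|exact HPi1].
  - exists t. split; [exact Ht|exact Hrej].
Qed.
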